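(* Let $X,Y$ be complex Banach spaces, $\emptyset\ne I\subseteq\mathbb R^n$, let $\mathcal B$ be a non-empty collection of non-empty subsets of $X$ such that every $x\in X$ belongs to some $B\in\mathcal B$, and let $\mathrm R$ be a non-empty collection of sequences in $\mathbb R^n$ such that $\mathbf t+\mathbf b(l)\in I$ whenever $\mathbf t\in I$, $\mathbf b\in\mathrm R$, $l\in\mathbb N$. Suppose that $F:I\times X\to Y$ is $(\mathrm R,\mathcal B)$-multi-almost periodic, $a\ge 0$ and $x\in X$. If there exists a sequence $\mathbf b(\cdot)$ in $\mathrm R$ all of whose subsequences are unbounded and such that $\mathbf T-\mathbf b(l)\in I$ whenever $\mathbf T\in I$ and $l\in\mathbb N$, then $$\sup_{\mathbf t\in I}\|F(\mathbf t;x)\|_Y=\sup_{\mathbf t\in I,\ |\mathbf t|\ge a}\|F(\mathbf t;x)\|_Y.$$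
   Context: A continuous function $F:I\times X\to Y$ is called $(\mathrm R,\mathcal B)$-multi-almost periodic if for every $B\in\mathcal B$ and every sequence $(\mathbf b_k)\in\mathrm R$ there exist a subsequence $(\mathbf b_{k_l})$ of $(\mathbf b_k)$ and a function $F^\ast:I\times X\to Y$ such that $\lim_{l\to\infty}F(\mathbf t+\mathbf b_{k_l};x)=F^\ast(\mathbf t;x)$ uniformly for $x\in B$ and $\mathbf t\in I$. $|\cdot|$ denotes the Euclidean norm. *)

From mathcomp Require Import all_boot all_algebra.
From mathcomp Require Import all_classical all_reals all_analysis.
From mathcomp Require Import complex.
Import GRing.Theory Num.Theory ComplexField.
Import numFieldTopology.Exports numFieldNormedType.Exports.
Set Implicit Arguments. Unset Strict Implicit. Unset Printing Implicit Defensive.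
Local Open Scope ring_scope.
Local Open Scope classical_set_scope.

(* A complex Banach space is a
   completeNormedModType R[i]; its norm takes values in R[i] (always of the
   form r%:C with r >= 0); [cnorm] is the corresponding real number. *)
Definition cnorm (R : realType) (V : normedModType R[i]) (v : V) : R :=
  complex.Re `|v|.

Definition enorm (R : realType) (n : nat) (t : 'rV[R]_n) : R :=
  Num.sqrt (\sum_(i < n) t ord0 i ^+ 2).

Definition RB_multi_almost_periodic (R : realType) (n : nat)
  (X Y : normedModType R[i]) (I : set 'rV[R]_n)
  (RR : set (nat -> 'rV[R]_n)) (BB : set (set X))
  (F : 'rV[R]_n -> X -> Y) : Prop :=
  {within [set p : 'rV[R]_n * X | I p.1], continuous (fun p => F p.1 p.2)} /\
  forall B, BB B -> forall b, RR b ->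
    exists (phi : nat -> nat) (Fs : 'rV[R]_n -> X -> Y),
      (forall k l, (k < l)%N -> (phi k < phi l)%N) /\
      forall eps : R, 0 < eps -> exists N : nat, forall l : nat, (N <= l)%N ->
        forall t x, I t -> B x -> cnorm (F (t + b (phi l)) x - Fs t x) < eps.

From mathcomp Require Import all_boot all_algebra.
From mathcomp Require Import all_classical all_reals all_analysis.
From mathcomp Require Import complex.
From mathcomp Require Import lra.
Import order.Order.TTheory GRing.Theory Num.Theory ComplexField.
Import numFieldTopology.Exports numFieldNormedType.Exports.
Set Implicit Arguments. Unset Strict Implicit. Unset Printing Implicit Defensive.
Local Open Scope ring_scope.
Local Open Scope classical_set_scope.

(* Given t in I, translate it back by a term b(phi N) of the convergent
   subsequence, to s := t - b(phi N) in I.  Then F(t) = F(s + b(phi N)) and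
   F(s + b(phi l)) are both close to the limit F*(s) for all large l, and since
   every subsequence of b is unbounded, s + b(phi l) can be chosen of norm at
   least a.  So every value ||F(t; x)|| is approximated by values at points of
   norm at least a, and the two suprema agree. *)

Section ComplexNorm.
Variables (R : realType) (V : normedModType R[i]).

Lemma cnormE (v : V) : `|v| = (cnorm v)%:C%C.
Proof. by rewrite /cnorm RRe_real // ger0_real. Qed.

Lemma cnormD (u v : V) : cnorm (u + v) <= cnorm u + cnorm v.
Proof. by rewrite -lecR rmorphD /= -!cnormE ler_normD. Qed.

Lemma cnorm_distC (u v : V) : cnorm (u - v) = cnorm (v - u).
Proof. by rewrite /cnorm distrC. Qed.

Lemma cnorm_le_via (u v w : V) :
  cnorm u <= cnorm v + cnorm (u - w) + cnorm (v - w).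
Proof.
have {1}-> : u = v + ((u - w) + (w - v)) by rewrite addrCA [v + _]addrC !subrK.
rewrite (cnorm_distC v w) -[X in _ <= X]addrA; apply: (le_trans (cnormD _ _)).
by rewrite lerD2l; apply: cnormD.
Qed.

End ComplexNorm.

Section EuclideanNorm.
Variables (R : realType) (n : nat).
Implicit Types (u v : 'rV[R]_n).

Lemma enorm_ge0 u : 0 <= enorm u.
Proof. exact: sqrtr_ge0. Qed.

Lemma sqr_enorm u : enorm u ^+ 2 = \sum_(i < n) u ord0 i ^+ 2.
Proof. by rewrite sqr_sqrtr // sumr_ge0 // => i _; rewrite sqr_ge0. Qed.

Lemma sqr_enormB_le u v : enorm (u - v) ^+ 2 <= 2 * (enorm u ^+ 2 + enorm v ^+ 2).
Proof.
rewrite !sqr_enorm -big_split mulr_sumr /=; apply: ler_sum => i _.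
rewrite !mxE; have := sqr_ge0 (u ord0 i + v ord0 i).
set p := u ord0 i; set q := v ord0 i; nra.
Qed.

Lemma enormD_large (c : 'rV[R]_n) (M : R) :
  exists K, forall u, K < enorm u -> M <= enorm (u + c).
Proof.
(* [K^2 >= 2 (M^2 + |c|^2)], while [|u|^2 <= 2 (|u + c|^2 + |c|^2)]. *)
exists (2 * (`|M| + enorm c)) => u ltKu; rewrite leNgt; apply/negP => small.
have := sqr_enormB_le (u + c) c; rewrite addrK.
have := enorm_ge0 (u + c); have := enorm_ge0 c; have := normr_ge0 M.
have := ler_norm M; nra.
Qed.

End EuclideanNorm.

Lemma unbounded_subseq_tail (R : realType) (u : nat -> R) :
  (forall phi, {homo phi : k l / (k < l)%N} -> forall M, exists l, M < u (phi l)) ->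
  forall phi, {homo phi : k l / (k < l)%N} ->
  forall N M, exists2 l, (N <= l)%N & M < u (phi l).
Proof.
move=> unb phi phi_incr N M.
have [|l ltM] := unb (fun k => phi (k + N)%N) _ M.
  by move=> k l lt_kl; apply: phi_incr; rewrite ltn_add2r.
by exists (l + N)%N; rewrite ?leq_addl.
Qed.

Lemma ereal_sup_image_approx (R : realType) (T : Type) (f : T -> R) (A A' : set T) :
  A' `<=` A ->
  (forall t e, A t -> 0 < e -> exists2 t', A' t' & f t <= f t' + e) ->
  ereal_sup [set (f t)%:E | t in A] = ereal_sup [set (f t)%:E | t in A'].
Proof.
move=> subA' approx; apply/le_anti/andP; split; last first.
  by apply: ereal_sup_le => _ [t A't <-]; exists t; [apply: subA'|].
apply: ge_ereal_sup => _ [t At <-]; apply/lee_addgt0Pr => e e0.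
have [t' A't' le_ft] := approx t e At e0.
apply: (@le_trans _ _ ((f t')%:E + e%:E)%E); first by rewrite -EFinD lee_fin.
by rewrite leeD2r //; apply: ereal_sup_ubound; exists t'.
Qed.

Section FarPoints.
Variables (R : realType) (n : nat) (X Y : normedModType R[i]).
Variables (I : set 'rV[R]_n) (RR : set (nat -> 'rV[R]_n)) (BB : set (set X)).
Variables (F : 'rV[R]_n -> X -> Y) (a : R) (x : X) (b : nat -> 'rV[R]_n).
Hypothesis I_shift : forall t c l, I t -> RR c -> I (t + c l).
Hypothesis F_map : RB_multi_almost_periodic I RR BB F.
Hypothesis x_covered : exists B, BB B /\ B x.
Hypothesis RR_b : RR b.
Hypothesis b_unbounded : forall phi, {homo phi : k l / (k < l)%N} ->
  forall M, exists l, M < enorm (b (phi l)).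
Hypothesis I_shiftN : forall t l, I t -> I (t - b l).

Lemma far_value_approx t e : I t -> 0 < e ->
  exists2 t', I t' /\ a <= enorm t' & cnorm (F t x) <= cnorm (F t' x) + e.
Proof.
move=> It e0; have [B [BB_B Bx]] := x_covered.
have [phi [Fs [phi_incr conv]]] := F_map.2 B BB_B b RR_b.
have [N near_Fs] := conv (e / 2) ltac:(by rewrite divr_gt0).
pose s := t - b (phi N); have Is : I s by exact: I_shiftN.
have [K far] := enormD_large s a.
have [l leNl ltK] := unbounded_subseq_tail (u := fun k => enorm (b k)) b_unbounded phi_incr N K.
exists (s + b (phi l)); first by split; [apply: I_shift | rewrite addrC; apply: far].
have t_shift : F t x = F (s + b (phi N)) x by rewrite subrK.
have := near_Fs N (leqnn N) s x Is Bx; have := near_Fs l leNl s x Is Bx.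
have := cnorm_le_via (F t x) (F (s + b (phi l)) x) (Fs s x).
rewrite t_shift; lra.
Qed.

End FarPoints.

Theorem proposition2p6 (R : realType) (n : nat)
  (X Y : completeNormedModType R[i]) (I : set 'rV[R]_n)
  (BB : set (set X)) (RR : set (nat -> 'rV[R]_n))
  (F : 'rV[R]_n -> X -> Y) (a : R) (x : X) :
  I !=set0 ->
  BB !=set0 ->
  (forall B, BB B -> B !=set0) ->
  (forall y : X, exists B, BB B /\ B y) ->
  RR !=set0 ->
  (forall t b l, I t -> RR b -> I (t + b l)) ->
  RB_multi_almost_periodic I RR BB F ->
  0 <= a ->
  (exists b, RR b /\
     (forall phi : nat -> nat, (forall k l, (k < l)%N -> (phi k < phi l)%N) ->
        forall M : R, exists l, M < enorm (b (phi l))) /\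
     (forall T l, I T -> I (T - b l))) ->
  ereal_sup [set (cnorm (F t x))%:E | t in I] =
  ereal_sup [set (cnorm (F t x))%:E | t in [set t | I t /\ a <= enorm t]].
Proof.
move=> _ _ _ BB_cover _ I_shift F_map _ [b [RR_b [b_unbounded I_shiftN]]].
apply: (ereal_sup_image_approx (f := fun t => cnorm (F t x))) => [t [] //|t e].
exact: far_value_approx I_shift F_map (BB_cover x) RR_b b_unbounded I_shiftN t e.
Qed.
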